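(* Let $L\subseteq\Sigma^\omega$ be a prefix-independent language recognised by some deterministic coBüchi automaton. Let $\mathcal{A}_{\min}$ be a nice, safe minimal and safe centralised history-deterministic coBüchi automaton recognising $L$, with safe components $\mathcal{S}_1,\dots,\mathcal{S}_k$ (with state sets $S_i$ and transition sets $\Delta_i$), and let $n_{\max}=\max_{1\le i\le k}|S_i|$. Let $Q=\{p_1,\dots,p_{n_{\max}}\}$ and, for each $i$, let $\phi_i:S_i\to Q$ be any injective map; extend it to transitions by $\phi_i(q,a,q')=(\phi_i(q),a,\phi_i(q'))$. Let $\mathcal{A}_{\mathrm{PI}}$ be the generalised coBüchi automaton with states $Q$, initial state $p_1$, transitions $\Delta=Q\times\Sigma\times Q$, colours $\{1,\dots,k\}$, and labelling $\mathrm{col}(e)=\{i\in\{1,\dots,k\} : \text{there is no } e'\in\Delta_i \text{ with } \phi_i(e')=e\}$. Then $\mathcal{A}_{\mathrm{PI}}$ is history-deterministic and $\mathcal{L}(\mathcal{A}_{\mathrm{PI}})=L$.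
   Context: An automaton is a tuple $(Q,\Sigma,q_{\mathrm{init}},\Delta,\Gamma,\mathrm{col},W)$ with finite state set, finite input alphabet $\Sigma$, initial state, transitions $\Delta\subseteq Q\times\Sigma\times Q$, output alphabet $\Gamma$, labelling $\mathrm{col}:\Delta\to\Gamma$, acceptance condition $W\subseteq\Gamma^\omega$. A run on $w=a_1a_2\cdots$ is a sequence $(q_0,a_1,q_1)(q_1,a_2,q_2)\cdots$ of transitions with $q_0=q_{\mathrm{init}}$, accepting if its label sequence is in $W$; $\mathcal{L}(\mathcal{A})$ is the set of words with an accepting run. With a finite colour set $C$ and $\Gamma=2^C$, generalised coBüchi means $W=\{x : \text{some } c\in C \text{ occurs in only finitely many letters of } x\}$; a coBüchi automaton is the case $C=\{1\}$, and its coBüchi transitions are those labelled $\{1\}$. A resolver is a map $\sigma:\Sigma^+\to\Delta$ such that for every $w=a_0a_1\cdots$, $\sigma(a_0)\sigma(a_0a_1)\cdots$ is a run on $w$, accepting whenever $w\in\mathcal{L}(\mathcal{A})$; history-deterministic means a resolver exists. $L$ is prefix-independent if for all $u\in\Sigma^*$, $w\in\Sigma^\omega$: $uw\in L\iff w\in L$. For a coBüchi automaton $\mathcal{A}$: $\mathcal{A}_{\mathrm{safe}}$ is obtained by deleting all coBüchi transitions; a safe component is a strongly connected component of $\mathcal{A}_{\mathrm{safe}}$ (a maximal set of states mutually reachable in $\mathcal{A}_{\mathrm{safe}}$, together with the transitions of $\mathcal{A}_{\mathrm{safe}}$ between them); the safe language of a state $q$ is the set of $w\in\Sigma^\omega$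 having an infinite path from $q$ in $\mathcal{A}_{\mathrm{safe}}$; two states are equivalent if the automaton started from each of them recognises the same language. $\mathcal{A}$ is semantically deterministic if whenever $(q,a,p_1),(q,a,p_2)\in\Delta$, $p_1$ and $p_2$ are equivalent; in normal form if every transition between two different safe components is a coBüchi transition; safe deterministic if $\mathcal{A}_{\mathrm{safe}}$ is deterministic; nice if all states are reachable from the initial state and it is semantically deterministic, in normal form and safe deterministic. It is safe centralised if any two equivalent states whose safe languages are comparable under inclusion lie in the same safe component, and safe minimal if any two equivalent states with equal safe languages are equal. *)

From HB Require Import structures.
From mathcomp Require Import all_boot.
Set Implicit Arguments. Unset Strict Implicit. Unset Printing Implicit Defensive.

(* All automata use Gamma = {set C} for a finite colour set C, and the
   generalised coBuchi acceptance condition.  A coBuchi automaton is the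
   case C = unit (the single colour tt plays the role of "1"). *)

Record GCBA (Sigma : finType) (C : finType) := MkGCBA {
  state : finType;
  init : state;
  trans : {set state * Sigma * state};
  col : state * Sigma * state -> {set C} }.
Arguments MkGCBA {Sigma C}.
Arguments state {Sigma C} g.
Arguments init {Sigma C} g.
Arguments trans {Sigma C} g.
Arguments col {Sigma C} g _.

Section Automata.
Variables (Sigma : finType) (C : finType).
Implicit Types (A : GCBA Sigma C) (w : nat -> Sigma).

Definition gcb_acc (x : nat -> {set C}) : Prop :=
  exists c : C, exists N : nat, forall n, N <= n -> c \notin x n.

Definition is_run_from A (q : state A) (r : nat -> state A * Sigma * state A) w :=
  (r 0).1.1 = q /\
  forall i, [/\ r i \in trans A, (r i).1.2 = w i & (r i.+1).1.1 = (r i).2].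

Definition accepting A (r : nat -> state A * Sigma * state A) :=
  gcb_acc (fun i => col A (r i)).

Definition lang_from A (q : state A) w : Prop :=
  exists r, is_run_from q r w /\ accepting r.

Definition lang A w : Prop := lang_from (init A) w.

Definition recognises A (L : (nat -> Sigma) -> Prop) := forall w, lang A w <-> L w.

(* resolvers act on nonempty finite words; the value on [::] is irrelevant *)
Definition history_deterministic A : Prop :=
  exists sigma : seq Sigma -> state A * Sigma * state A,
    forall w, is_run_from (init A) (fun i => sigma (mkseq w i.+1)) w /\
              (lang A w -> accepting (fun i => sigma (mkseq w i.+1))).

Definition deterministic A : Prop :=
  forall (q : state A) (a : Sigma), exists! q', (q, a, q') \in trans A.

End Automata.

Definition cat_word (Sigma : Type) (u : seq Sigma) (w : nat -> Sigma) : nat -> Sigma :=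
  fun i => if i < size u then nth (w 0) u i else w (i - size u).

Definition prefix_independent (Sigma : Type) (L : (nat -> Sigma) -> Prop) :=
  forall (u : seq Sigma) (w : nat -> Sigma), L (cat_word u w) <-> L w.

Section CoBuchi.
Variable Sigma : finType.
Notation CBA := (GCBA Sigma unit).
Variable A : CBA.
Implicit Types (q p : state A) (e : state A * Sigma * state A).

Definition cob_trans e : bool := col A e == [set tt].
Definition safe_trans e : bool := (e \in trans A) && ~~ cob_trans e.
Definition safe_rel : rel (state A) := fun q q' => [exists a, safe_trans (q, a, q')].
Definition scc_rel q p : bool := connect safe_rel q p && connect safe_rel p q.
Definition scc q : {set state A} := [set p | scc_rel q p].
Definition is_safe_component (S : {set state A}) := exists q, S = scc q.
Definition comp_trans (S : {set state A}) : {set state A * Sigma * state A} :=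
  [set e | safe_trans e && (e.1.1 \in S) && (e.2 \in S)].

Definition safe_lang q (w : nat -> Sigma) : Prop :=
  exists r : nat -> state A, r 0 = q /\ forall i, safe_trans (r i, w i, r i.+1).

Definition equiv_states q p : Prop := forall w, lang_from q w <-> lang_from p w.

Definition sem_det : Prop := forall q a p1 p2,
  (q, a, p1) \in trans A -> (q, a, p2) \in trans A -> equiv_states p1 p2.
Definition normal_form : Prop := forall q a p,
  (q, a, p) \in trans A -> ~~ scc_rel q p -> cob_trans (q, a, p).
Definition safe_deterministic : Prop := forall q a p1 p2,
  safe_trans (q, a, p1) -> safe_trans (q, a, p2) -> p1 = p2.
Definition all_reachable : Prop := forall q,
  connect (fun x y => [exists a, (x, a, y) \in trans A]) (init A) q.
Definition nice : Prop :=
  [/\ all_reachable, sem_det, normal_form & safe_deterministic].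
Definition safe_centralised : Prop := forall q p, equiv_states q p ->
  ((forall w, safe_lang q w -> safe_lang p w) \/
   (forall w, safe_lang p w -> safe_lang q w)) -> scc_rel q p.
Definition safe_minimal : Prop := forall q p, equiv_states q p ->
  (forall w, safe_lang q w <-> safe_lang p w) -> q = p.

End CoBuchi.

(* Components are enumerated as comp : 'I_k -> sets
   (colour i in 'I_k corresponds to S_{i+1}); Q = {p_1..p_nmax} is the
   ordinal type 'I_(nmax.-1.+1) (= 'I_nmax as nmax >= 1), p_1 = ord0. *)
Section API.
Variables (Sigma : finType) (A : GCBA Sigma unit) (k : nat)
          (comp : 'I_k -> {set state A}).

Definition nmax : nat := \max_(i < k) #|comp i|.
Definition PI_state : finType := 'I_(nmax.-1.+1).

Variable phi : 'I_k -> state A -> PI_state.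

Definition phi_tr (i : 'I_k) (e : state A * Sigma * state A) : PI_state * Sigma * PI_state :=
  (phi i e.1.1, e.1.2, phi i e.2).

Definition A_PI : GCBA Sigma ('I_k) :=
  MkGCBA PI_state ord0 setT
    (fun e => [set i : 'I_k | ~~ [exists e', (e' \in comp_trans (comp i)) && (phi_tr i e' == e)]]).

End API.

From Stdlib Require Import FunctionalExtensionality.
From HB Require Import structures.
From mathcomp Require Import all_boot.
Set Implicit Arguments. Unset Strict Implicit. Unset Printing Implicit Defensive.

(* An accepting run of A_PI eventually avoids some colour i, i.e. it eventually
   follows phi_i-images of transitions of S_i.  As phi_i is injective on S_i,
   this suffix lifts to a safe run of A_min; since every state of A_min is
   reachable, some word u w' with w' a suffix of the input is in L, and
   prefix-independence gives the input itself.  Conversely, a resolver of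
   A_min read through the phi of the component of the current state resolves
   A_PI: an accepting run of A_min eventually stays safe, hence (normal form)
   inside one safe component S_i, and from then on its image avoids colour i. *)

Definition drop_word (Sigma : Type) (N : nat) (w : nat -> Sigma) : nat -> Sigma :=
  fun n => w (n + N).

Lemma cat_word0 (Sigma : Type) (v : nat -> Sigma) : cat_word [::] v = v.
Proof. by apply: functional_extensionality => i; rewrite /cat_word subn0. Qed.

Lemma cat_word_cons (Sigma : Type) (a : Sigma) (u : seq Sigma) (v : nat -> Sigma) :
  cat_word (a :: u) v = fun i => if i is j.+1 then cat_word u v j else a.
Proof. by apply: functional_extensionality => -[]. Qed.

Lemma cat_word_mkseq_drop (Sigma : Type) (N : nat) (w : nat -> Sigma) :
  cat_word (mkseq w N) (drop_word N w) = w.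
Proof.
apply: functional_extensionality => n; rewrite /cat_word /drop_word size_mkseq.
by case: ltnP => [lt_nN | le_Nn]; [rewrite nth_mkseq | rewrite subnK].
Qed.

Lemma prefix_independent_drop (Sigma : Type) (L : (nat -> Sigma) -> Prop)
    (N : nat) (w : nat -> Sigma) :
  prefix_independent L -> L (drop_word N w) -> L w.
Proof. by move=> PI /(PI (mkseq w N)); rewrite cat_word_mkseq_drop. Qed.

Section Runs.
Variables (Sigma C : finType) (A : GCBA Sigma C).

Lemma lang_from_cons (x y : state A) (a : Sigma) (u : seq Sigma) (v : nat -> Sigma) :
  (x, a, y) \in trans A -> lang_from y (cat_word u v) ->
  lang_from x (cat_word (a :: u) v).
Proof.
move=> xay [r [[r0 run_r] [c [N hN]]]]; rewrite cat_word_cons.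
exists (fun i => if i is j.+1 then r j else (x, a, y)); split.
  by split=> // -[|i] /=; [rewrite r0 | exact: run_r].
by exists c, N.+1 => -[|n] //= /hN.
Qed.

Lemma lang_from_connect (x q : state A) (v : nat -> Sigma) :
  connect (fun x y => [exists a, (x, a, y) \in trans A]) x q ->
  lang_from q v -> exists u, lang_from x (cat_word u v).
Proof.
case/connectP=> p; elim: p x => [|y p IHp] x /=.
  by move=> _ -> Lv; exists [::]; rewrite cat_word0.
case/andP=> /existsP[a xay] path_p /(IHp y path_p) /[apply] -[u Luv].
by exists (a :: u); apply: lang_from_cons xay Luv.
Qed.

End Runs.

Section CoBuchi.
Variables (Sigma : finType) (A : GCBA Sigma unit).
Implicit Types (q p : state A) (w : nat -> Sigma).

Lemma safe_trans_col e : safe_trans e -> tt \notin col A e.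
Proof.
case/andP=> _; apply: contra => col_e.
by apply/eqP/setP => -[]; rewrite in_set1 col_e.
Qed.

Lemma safe_lang_lang q w : safe_lang q w -> lang_from q w.
Proof.
case=> r [r0 safe_r]; exists (fun i => (r i, w i, r i.+1)); split.
  by split=> // i; case/andP: (safe_r i).
by exists tt, 0 => n _; apply: safe_trans_col.
Qed.

Lemma scc_eq q p : scc_rel q p -> scc q = scc p.
Proof.
case/andP=> qp pq; apply/setP=> x; rewrite !inE /scc_rel.
apply/andP/andP=> -[qx xq]; split.
- exact: connect_trans pq qx.
- exact: connect_trans xq qp.
- exact: connect_trans qp qx.
- exact: connect_trans xq pq.
Qed.

Lemma scc_self q : q \in scc q.
Proof. by rewrite inE /scc_rel connect0. Qed.

Lemma safe_trans_scc q a p :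
  normal_form A -> safe_trans (q, a, p) -> scc q = scc p.
Proof.
move=> nf /andP[qap not_cob]; apply: scc_eq; apply: contraNT not_cob.
exact: nf qap.
Qed.

Lemma accepting_eventually_safe q r w :
  is_run_from q r w -> accepting r ->
  exists N, forall n, N <= n -> safe_trans (r n).
Proof.
case=> _ run_r [[] [N hN]]; exists N => n /hN tt_n.
have [trans_n _ _] := run_r n; rewrite /safe_trans trans_n /cob_trans /=.
by apply: contra tt_n => /eqP ->; rewrite set11.
Qed.

Lemma accepting_run_in_component q r w :
  normal_form A -> is_run_from q r w -> accepting r ->
  exists q0 N, forall n, N <= n -> r n \in comp_trans (scc q0).
Proof.
move=> nf run_r acc_r; have [N safe_r] := accepting_eventually_safe run_r acc_r.
have scc_src n : N <= n -> scc (r n).1.1 = scc (r N).1.1.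
  move=> /subnK <-; elim: (n - N) => // d IHd.
  have [_ _ link] := run_r.2 (d + N).
  have := safe_r _ (leq_addl d N); case: (r (d + N)) IHd link => [[x a] y] /= <- ->.
  by move/(safe_trans_scc nf) ->.
exists (r N).1.1, N => n le_Nn; have [_ _ link] := run_r.2 n.
have le_Nn1 : N <= n.+1 by exact: leqW.
by rewrite inE safe_r //= -{1}(scc_src n) // scc_self -link -(scc_src n.+1) ?scc_self.
Qed.

End CoBuchi.

Section PIAutomaton.
Variables (Sigma : finType) (A : GCBA Sigma unit) (k : nat)
          (comp : 'I_k -> {set state A}) (phi : 'I_k -> state A -> PI_state comp).
Hypotheses (compS : forall i, is_safe_component (comp i)) (comp_inj : injective comp)
           (comp_onto : forall S, is_safe_component S -> exists i, comp i = S)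
           (phi_inj : forall i, {in comp i &, injective (phi i)}).
Implicit Types (q : state A) (w : nat -> Sigma).

Lemma uncoloured_run_safe_lang (i : 'I_k) (r : nat -> PI_state comp * Sigma * PI_state comp) w :
  (forall m, (r m).1.2 = w m /\ (r m.+1).1.1 = (r m).2) ->
  (forall m, i \notin col (A_PI phi) (r m)) ->
  exists q, safe_lang q w.
Proof.
move=> run_r uncol_r.
pose lift m := [pick e | (e \in comp_trans (comp i)) && (phi_tr phi i e == r m)].
have lift_spec m : exists2 e, lift m = Some e &
    [/\ safe_trans e, e.1.1 \in comp i, e.2 \in comp i & phi_tr phi i e = r m].
  move: (uncol_r m); rewrite inE negbK /lift => /existsP[e0 he0].
  case: pickP => [e /andP[] | /(_ e0)]; last by rewrite he0.
  by rewrite inE -andbA => /and3P[? ? ?] /eqP ?; exists e.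
pose g m := if lift m is Some e then e.1.1 else init A.
exists (g 0), g; split=> // m; rewrite /g.
have [e -> [safe_e _ e2 phi_e]] := lift_spec m.
have [e' -> [_ e'1 _ phi_e']] := lift_spec m.+1.
have link : e.2 = e'.1.1.
  apply: (phi_inj e2 e'1); move: (congr1 snd phi_e) (congr1 (fst \o fst) phi_e').
  by rewrite /= (run_r m).2 => -> ->.
have label : e.1.2 = w m by rewrite -(run_r m).1 -phi_e.
by rewrite /= -link -label; case: e {phi_e e2 link label} safe_e => [[]].
Qed.

Lemma lang_A_PI_suffix_safe w :
  lang (A_PI phi) w -> exists q N, safe_lang q (drop_word N w).
Proof.
case=> r [[_ run_r] [i [N uncol_r]]].
have [q Lq] : exists q, safe_lang q (drop_word N w); last by exists q, N.
apply: (@uncoloured_run_safe_lang i (fun m => r (m + N))) => m.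
  by have [_ label link] := run_r (m + N); rewrite /drop_word addSn.
exact/uncol_r/leq_addl.
Qed.

Lemma lang_A_PI_sub (L : (nat -> Sigma) -> Prop) w :
  all_reachable A -> prefix_independent L -> recognises A L ->
  lang (A_PI phi) w -> L w.
Proof.
move=> reach PI rec /lang_A_PI_suffix_safe[q [N /safe_lang_lang Lq]].
have [u Lu] := lang_from_connect (reach q) Lq.
by apply: (prefix_independent_drop (N := N) PI); apply/(PI u)/rec.
Qed.

Definition PI_proj q : PI_state comp :=
  if [pick i | comp i == scc q] is Some i then phi i q else ord0.

Lemma PI_proj_in i q : q \in comp i -> PI_proj q = phi i q.
Proof.
have [q' comp_i] := compS i; rewrite comp_i inE => /scc_eq scc_q.
rewrite /PI_proj; case: pickP => [j /eqP | /(_ i)]; last by rewrite comp_i scc_q eqxx.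
by rewrite -scc_q -comp_i => /comp_inj ->.
Qed.

(* The source of the first transition is sent to the initial state [ord0] of
   A_PI, whatever component [init A] lies in. *)
Definition proj_tr (n : nat) (e : state A * Sigma * state A) :
    PI_state comp * Sigma * PI_state comp :=
  (if n is 0 then ord0 else PI_proj e.1.1, e.1.2, PI_proj e.2).

Lemma run_proj q r w :
  is_run_from q r w ->
  is_run_from (A := A_PI phi) (init _) (fun n => proj_tr n (r n)) w.
Proof.
case=> _ run_r; split=> // n; have [_ label link] := run_r n.
by split; rewrite /= ?in_setT ?label ?link.
Qed.

Lemma accepting_proj q r w :
  normal_form A -> is_run_from q r w -> accepting r ->
  accepting (A := A_PI phi) (fun n => proj_tr n (r n)).
Proof.
move=> nf run_r acc_r; have [q0 [N in_r]] := accepting_run_in_component nf run_r acc_r.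
have [i comp_i] := comp_onto (ex_intro _ q0 erefl).
exists i, N.+1 => -[//|n] lt_Nn; rewrite inE negbK; apply/existsP; exists (r n.+1).
have := in_r n.+1 (ltnW lt_Nn); rewrite -comp_i inE => /andP[/andP[safe_e src] dst].
by rewrite safe_e src dst /proj_tr /= (PI_proj_in src) (PI_proj_in dst).
Qed.

End PIAutomaton.

Theorem proposition20 (Sigma : finType) (L : (nat -> Sigma) -> Prop)
  (Amin : GCBA Sigma unit) (k : nat) (comp : 'I_k -> {set state Amin})
  (phi : 'I_k -> state Amin -> PI_state comp) :
  prefix_independent L ->
  (exists D : GCBA Sigma unit, deterministic D /\ recognises D L) ->
  nice Amin -> safe_minimal Amin -> safe_centralised Amin ->
  history_deterministic Amin -> recognises Amin L ->
  (forall i, is_safe_component (comp i)) -> injective comp ->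
  (forall S, is_safe_component S -> exists i, comp i = S) ->
  (forall i, {in comp i &, injective (phi i)}) ->
  history_deterministic (A_PI phi) /\ recognises (A_PI phi) L.
Proof.
move=> PI _ [reach _ nf _] _ _ [sigma sigma_res] rec compS comp_inj comp_onto phi_inj.
have sound w : lang (A_PI phi) w -> L w by apply: lang_A_PI_sub.
pose res s := proj_tr phi (size s).-1 (sigma s).
have resE w : (fun n => res (mkseq w n.+1)) = (fun n => proj_tr phi n (sigma (mkseq w n.+1))).
  by apply: functional_extensionality => n; rewrite /res size_mkseq.
have res_run w : is_run_from (init (A_PI phi)) (fun n => res (mkseq w n.+1)) w.
  by rewrite resE; apply: run_proj (sigma_res w).1.
have res_acc w : L w -> accepting (A := A_PI phi) (fun n => res (mkseq w n.+1)).
  move/rec/(sigma_res w).2; rewrite resE; exact: accepting_proj nf (sigma_res w).1.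
split; first by exists res => w; split; [exact: res_run | move/sound/res_acc].
by move=> w; split=> [/sound // | /res_acc]; exists (fun n => res (mkseq w n.+1)).
Qed.
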